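(* Let $M$ be a tame paving matroid of rank $n$ on $[d]$ with set of dependent hyperplanes $\mathcal{L}$. Then for every $\gamma\in V_{\mathcal{C}(M)}$ and every $\epsilon>0$ there exists $\widetilde\gamma=(\widetilde\gamma_1,\ldots,\widetilde\gamma_d)\in V_{\mathcal{C}(M)}$ with $\|\gamma_p-\widetilde\gamma_p\|<\epsilon$ for all $p\in[d]$ such that $\dim\widetilde\gamma_l=n-1$ for every $l\in\mathcal{L}$, where $\widetilde\gamma_l=\operatorname{span}(\widetilde\gamma_p:p\in l)$.
   Context: A matroid of rank $n$ is paving if every circuit has size $n$ or $n+1$; a dependent hyperplane is a maximal subset of size at least $n$ all of whose $n$-subsets are circuits; tame means any three distinct dependent hyperplanes have empty intersection. The circuit variety $V_{\mathcal{C}(M)}$ is the set of tuples $(\gamma_1,\ldots,\gamma_d)$ of vectors in $\mathbb{C}^n$ such that $(\gamma_p)_{p\in S}$ is linearly dependent for every dependent set $S$ of $M$. *)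

From HB Require Import structures.
From mathcomp Require Import all_boot all_order all_algebra.
From mathcomp Require Import reals.
From mathcomp Require Export complex.
Set Implicit Arguments. Unset Strict Implicit. Unset Printing Implicit Defensive.
Import Order.TTheory GRing.Theory Num.Theory.
Local Open Scope ring_scope.

Definition is_matroid (d : nat) (indep : {set 'I_d} -> bool) : Prop :=
  [/\ indep set0,
      (forall A B : {set 'I_d}, A \subset B -> indep B -> indep A) &
      (forall A B : {set 'I_d}, indep A -> indep B -> #|A| < #|B| ->
         exists2 x, x \in B :\: A & indep (x |: A))]%N.

Definition dependent (d : nat) (indep : {set 'I_d} -> bool) (S : {set 'I_d}) :=
  ~~ indep S.

Definition circuit (d : nat) (indep : {set 'I_d} -> bool) (C : {set 'I_d}) :=
  dependent indep C /\
  (forall C' : {set 'I_d}, C' \proper C -> ~~ dependent indep C').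

Definition mrank (d : nat) (indep : {set 'I_d} -> bool) : nat :=
  \max_(B : {set 'I_d} | indep B) #|B|.

Definition paving (d n : nat) (indep : {set 'I_d} -> bool) : Prop :=
  is_matroid indep /\ mrank indep = n /\
  (forall C, circuit indep C -> #|C| = n \/ #|C| = n.+1).

Definition nsub_circuits (d n : nat) (indep : {set 'I_d} -> bool)
  (l : {set 'I_d}) : Prop :=
  (n <= #|l|)%N /\
  (forall S : {set 'I_d}, S \subset l -> #|S| = n -> circuit indep S).

Definition dep_hyperplane (d n : nat) (indep : {set 'I_d} -> bool)
  (l : {set 'I_d}) : Prop :=
  nsub_circuits n indep l /\
  (forall l' : {set 'I_d}, l \proper l' -> ~ nsub_circuits n indep l').

Definition tame (d n : nat) (indep : {set 'I_d} -> bool) : Prop :=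
  forall l1 l2 l3 : {set 'I_d},
    dep_hyperplane n indep l1 -> dep_hyperplane n indep l2 ->
    dep_hyperplane n indep l3 ->
    l1 != l2 -> l1 != l3 -> l2 != l3 -> l1 :&: l2 :&: l3 = set0.

Definition fam (C : Type) (d n : nat) (g : 'I_d -> 'rV[C]_n) (S : {set 'I_d}) :=
  [seq g p | p <- enum S].

Definition in_circuit_variety (R : rcfType) (d n : nat)
  (indep : {set 'I_d} -> bool) (g : 'I_d -> 'rV[R[i]]_n) : Prop :=
  forall S : {set 'I_d}, dependent indep S -> ~~ free (fam g S).

Definition cnorm (R : rcfType) (n : nat) (v : 'rV[R[i]]_n) : R :=
  Num.sqrt (\sum_(j < n) (complex.Re (v ord0 j) ^+ 2 + complex.Im (v ord0 j) ^+ 2)).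

From mathcomp Require Import all_boot all_order all_algebra.
From mathcomp Require Import reals complex boolp.
From mathcomp Require Import zify lra.
Set Implicit Arguments. Unset Strict Implicit. Unset Printing Implicit Defensive.
Import Order.TTheory GRing.Theory Num.Theory.
Local Open Scope ring_scope.

(* On a paving matroid, gamma lies in the circuit variety exactly when every
   dependent hyperplane l spans a subspace gamma_l of dimension < n.  If
   dim gamma_l < n - 1, some gamma_p with p in l is redundant in l, and moving
   it to gamma_p - c x with x outside gamma_l raises dim gamma_l by one.  By
   tameness p lies in at most one other dependent hyperplane l0; taking x in
   gamma_l0 when dim gamma_l0 = n - 1, and c small and generic, no dependent
   hyperplane loses dimension or reaches dimension n.  So the deficiency
   sum_l (n - 1 - dim gamma_l) drops while staying in the circuit variety, and
   finitely many perturbations of sizes eps/2, eps/4, ... make it vanish. *)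

Section LinearSpans.
Variables (K : fieldType) (vT : vectType K) (d : nat).
Implicit Types (g : 'I_d -> vT) (A B : {set 'I_d}) (U W Z : {vspace vT}) (v x : vT).

Definition gspan g A : {vspace vT} := (\sum_(q in A) <[g q]>)%VS.

Lemma gspan_sub g A U : {in A, forall q, g q \in U} -> (gspan g A <= U)%VS.
Proof. by move=> AU; apply/subv_sumP => q /AU; rewrite -memvE. Qed.

Lemma mem_gspan g A p : p \in A -> g p \in gspan g A.
Proof. by move=> pA; rewrite memvE (sumv_sup p). Qed.

Lemma gspanS g A B : A \subset B -> (gspan g A <= gspan g B)%VS.
Proof. by move=> /subsetP AB; apply: gspan_sub => q /AB /mem_gspan. Qed.

Lemma gspanD1 g A p : p \in A -> gspan g A = (<[g p]> + gspan g (A :\ p))%VS.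
Proof. by move=> pA; rewrite /gspan (big_setD1 p pA). Qed.

Lemma gspanU1 g A p : p \notin A -> gspan g (p |: A) = (<[g p]> + gspan g A)%VS.
Proof. by move=> pA; rewrite /gspan big_setU1. Qed.

Lemma eq_gspan g g' A : {in A, g =1 g'} -> gspan g A = gspan g' A.
Proof. by move=> gg'; apply: eq_bigr => q /gg' ->. Qed.

Lemma dim_addv_line v U : v \notin U -> \dim (<[v]> + U) = (\dim U).+1.
Proof.
move=> vU; have v_neq0 : v != 0 by apply: contraNneq vU => ->; rewrite mem0v.
rewrite dimv_disjoint_sum ?dim_vline ?v_neq0 //.
apply/eqP; rewrite -subv0; apply/subvP => w; rewrite memv_cap memv0.
case/andP=> /vlineP[k ->]; rewrite rpredZeq (negPf vU) orbF => /eqP->.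
by rewrite scale0r.
Qed.

Lemma dim_addv_line_le v U : (\dim (<[v]> + U) <= (\dim U).+1)%N.
Proof.
apply: leq_trans (dimv_add_leqif _ _).1 _.
by rewrite dim_vline -add1n leq_add2r leq_b1.
Qed.

Lemma dim_addv_line_mono v w U :
  (v \notin U -> w \notin U) -> (\dim (<[v]> + U) <= \dim (<[w]> + U))%N.
Proof.
have [vU _ | vU /(_ isT) wU] := boolP (v \in U); last by rewrite !dim_addv_line.
by rewrite (addv_idPr _) -?memvE // dimvS // addvSr.
Qed.

Lemma exists_notin_vspace U W :
  (\dim W < \dim U)%N -> exists2 x, x \in U & x \notin W.
Proof.
by move=> lt_WU; apply/subvPn; apply: contraTN lt_WU => /dimvS; rewrite -leqNgt.
Qed.

Lemma gspan_free_subset g A k : (k <= \dim (gspan g A))%N ->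
  exists2 S : {set 'I_d}, S \subset A & #|S| = k /\ \dim (gspan g S) = k.
Proof.
elim: k => [|k IH] lt_k.
  by exists set0; rewrite ?sub0set // cards0 /gspan big_set0 dimv0.
have [S SA [cardS dimS]] := IH (ltnW lt_k).
have [q qA gqS] : exists2 q, q \in A & g q \notin gspan g S.
  apply/exists_inP; rewrite -negb_forall_in; apply: contraL lt_k => /forall_inP SA'.
  by rewrite -leqNgt -dimS dimvS // gspan_sub.
have qS : q \notin S by apply: contra gqS => /mem_gspan.
exists (q |: S); first by rewrite subUset sub1set qA.
by rewrite cardsU1 qS cardS gspanU1 // dim_addv_line // dimS.
Qed.

Lemma gspan_redundant g A : (\dim (gspan g A) < #|A|)%N ->
  exists2 p, p \in A & gspan g (A :\ p) = gspan g A.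
Proof.
move=> lt_dim.
have [S SA [cardS dimS]] := gspan_free_subset (leqnn (\dim (gspan g A))).
have [p pA pS] : exists2 p, p \in A & p \notin S.
  apply/exists_inP; rewrite -negb_forall_in; apply: contraL lt_dim => /forall_inP AS.
  by rewrite -leqNgt -cardS subset_leq_card //; apply/subsetP.
have SA_eq : gspan g S = gspan g A by apply/eqP; rewrite eqEdim gspanS //= dimS.
have gpA : g p \in gspan g (A :\ p).
  have SAp : S \subset A :\ p by rewrite subsetD1 SA.
  by rewrite (subvP (gspanS g SAp)) // SA_eq mem_gspan.
by exists p; rewrite // (gspanD1 _ pA) (addv_idPr _) // -memvE.
Qed.

Lemma memv_line_uniq Z v x (c1 c2 : K) : (x \notin Z) || (v \notin Z) ->
  v - c1 *: x \in Z -> v - c2 *: x \in Z -> c1 = c2.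
Proof.
move=> out Z1 Z2; apply/eqP; apply: contraTT out => c12.
have xZ : x \in Z.
  have := memvB Z2 Z1; rewrite opprB addrC addrA subrK -scalerBl.
  by rewrite rpredZeq subr_eq0 (negPf c12).
by rewrite negb_or !negbK xZ -(subrK (c1 *: x) v) memvD ?memvZ.
Qed.

Definition upd g p v : 'I_d -> vT := fun q => if q == p then v else g q.

Lemma gspan_upd_in g p v A :
  p \in A -> gspan (upd g p v) A = (<[v]> + gspan g (A :\ p))%VS.
Proof.
move=> pA; rewrite (gspanD1 _ pA) /upd eqxx; congr (_ + _)%VS.
by apply: eq_gspan => q; rewrite !inE => /andP[/negPf ->].
Qed.

Lemma gspan_upd_out g p v A : p \notin A -> gspan (upd g p v) A = gspan g A.
Proof.
by move=> pA; apply: eq_gspan => q qA; rewrite /upd; case: eqP => // qp; rewrite -qp qA in pA.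
Qed.

Lemma gspan_upd_sub g p v A :
  v \in gspan g A -> (gspan (upd g p v) A <= gspan g A)%VS.
Proof.
by move=> vA; apply: gspan_sub => q qA; rewrite /upd; case: eqP => // _; apply: mem_gspan.
Qed.

Lemma dim_gspan_upd_le g p v A :
  (\dim (gspan (upd g p v) A) <= (\dim (gspan g A)).+1)%N.
Proof.
have [pA | pA] := boolP (p \in A); last by rewrite gspan_upd_out.
rewrite gspan_upd_in //; apply: leq_trans (dim_addv_line_le _ _) _.
by rewrite ltnS dimvS // gspanS // subsetDl.
Qed.

Lemma dim_gspan_upd_ge g p v A :
  (g p \notin gspan g (A :\ p) -> v \notin gspan g (A :\ p)) ->
  (\dim (gspan g A) <= \dim (gspan (upd g p v) A))%N.
Proof.
have [pA | pA] := boolP (p \in A); last by rewrite gspan_upd_out.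
by rewrite gspan_upd_in // (gspanD1 _ pA); apply: dim_addv_line_mono.
Qed.

End LinearSpans.

Lemma span_fam (K : fieldType) (d n : nat) (g : 'I_d -> 'rV[K]_n) A :
  span (fam g A) = gspan g A.
Proof. by rewrite span_def /fam big_map big_enum. Qed.

Lemma free_fam (K : fieldType) (d n : nat) (g : 'I_d -> 'rV[K]_n) A :
  free (fam g A) = (\dim (gspan g A) == #|A|).
Proof. by rewrite /free span_fam /fam size_map cardE. Qed.

Lemma dim_rV_fullv (K : fieldType) (n : nat) : \dim (fullv : {vspace 'rV[K]_n}) = n.
Proof. by rewrite dimvf /dim /= mul1n. Qed.

Lemma dim_rV_vspace (K : fieldType) (n : nat) (U : {vspace 'rV[K]_n}) : (\dim U <= n)%N.
Proof. by have := dimvS (subvf U); rewrite dim_rV_fullv. Qed.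

Lemma exists_notin_vspace_rV (K : fieldType) (n : nat) (U W : {vspace 'rV[K]_n}) :
  (\dim W < n.-1)%N -> exists2 x, x \notin W & (\dim U = n.-1 -> x \in U).
Proof.
move=> lt_W; have [dimU | neU] := eqVneq (\dim U) n.-1.
  by have [|x ? ?] := exists_notin_vspace (U := U) (W := W); [rewrite dimU | exists x].
have [|x _ ?] := exists_notin_vspace (U := fullv) (W := W).
  by rewrite dim_rV_fullv; lia.
by exists x => // /eqP; rewrite (negPf neU).
Qed.

Section PavingMatroids.
Variables (d n : nat) (indep : {set 'I_d} -> bool).
Implicit Types (S C l : {set 'I_d}).

Lemma dependent_has_circuit S :
  dependent indep S -> exists2 C : {set 'I_d}, C \subset S & circuit indep C.
Proof.
move=> depS; pose P C := (C \subset S) && dependent indep C.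
have PS : P S by rewrite /P subxx.
case: (arg_minnP (fun C => #|C|) PS) => C /andP[CS depC] Cmin.
exists C => //; split => // C' C'C; apply/negP => depC'.
have P'C : P C' by rewrite /P depC' (subset_trans (proper_sub C'C) CS).
by have := Cmin _ P'C; rewrite leqNgt proper_card.
Qed.

Lemma nsub_circuits_sub_dep_hyperplane S : nsub_circuits n indep S ->
  exists2 l : {set 'I_d}, S \subset l & dep_hyperplane n indep l.
Proof.
move=> hS; pose P l := (S \subset l) && `[< nsub_circuits n indep l >].
have PS : P S by rewrite /P subxx; apply/asboolP.
case: (arg_maxnP (fun l => #|l|) PS) => l /andP[Sl /asboolP hl] lmax.
exists l => //; split => // l' ll' hl'.
have P'l : P l' by rewrite /P (subset_trans Sl (proper_sub ll')); apply/asboolP.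
by have /= := lmax _ P'l; rewrite leqNgt proper_card.
Qed.

Lemma tame_dep_hyperplanes_through l p : tame n indep ->
  dep_hyperplane n indep l -> p \in l ->
  exists l0, dep_hyperplane n indep l0 /\
    forall l', dep_hyperplane n indep l' -> p \in l' -> l' = l \/ l' = l0.
Proof.
move=> htame hl pl.
case: (pickP (fun l1 => [&& `[< dep_hyperplane n indep l1 >], l1 != l & p \in l1])).
  move=> l1 /and3P[/asboolP hl1 l1l pl1]; exists l1; split => // l' hl' pl'.
  have [-> | l'l] := eqVneq l' l; first by left.
  have [-> | l'l1] := eqVneq l' l1; first by right.
  have /setP/(_ p) := htame _ _ _ hl' hl1 hl l'l1 l'l l1l.
  by rewrite !inE pl' pl1 pl.
move=> none; exists l; split => // l' hl' pl'; left; apply/eqP.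
apply: contraFT (none l') => l'l; rewrite l'l pl' !andbT; exact/asboolP.
Qed.

Lemma circuit_varietyP (R : rcfType) (g : 'I_d -> 'rV[R[i]]_n) :
  paving n indep -> in_circuit_variety indep g <->
  (forall l, dep_hyperplane n indep l -> \dim (gspan g l) < n)%N.
Proof.
case=> _ [_ circ_card]; split => [hg l [[_ hl] _] | hdim S depS].
  rewrite ltnNge; apply/negP => /gspan_free_subset[S Sl [cardS dimS]].
  by have := hg S (proj1 (hl S Sl cardS)); rewrite free_fam dimS cardS eqxx.
rewrite free_fam neq_ltn; have [lt_nS | le_Sn] := ltnP n #|S|.
  by rewrite (leq_ltn_trans (dim_rV_vspace _) lt_nS).
have [C CS circC] := dependent_has_circuit depS.
have cardC : #|C| = n.
  by have := subset_leq_card CS; case: (circ_card C circC) => ->; lia.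
have eqCS : C = S by apply/eqP; rewrite eqEcard CS cardC.
have [l Sl hl] : exists2 l : {set 'I_d}, S \subset l & dep_hyperplane n indep l.
  apply: nsub_circuits_sub_dep_hyperplane; split; first by rewrite -eqCS cardC.
  move=> S' S'S cardS'; suff -> : S' = C by [].
  by apply/eqP; rewrite eqEcard eqCS S'S cardS' -eqCS cardC leqnn.
by rewrite (leq_ltn_trans (dimvS (gspanS g Sl))) // -eqCS cardC hdim.
Qed.

End PavingMatroids.

Lemma sum_sqr_le_sqr_sum (R : realDomainType) (I : Type) (r : seq I) (f : I -> R) :
  (forall i, 0 <= f i) -> \sum_(i <- r) f i ^+ 2 <= (\sum_(i <- r) f i) ^+ 2.
Proof.
move=> f_ge0; elim: r => [|a r IH]; first by rewrite !big_nil expr0n.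
rewrite !big_cons; have := f_ge0 a.
have : 0 <= \sum_(i <- r) f i by apply: sumr_ge0.
nra.
Qed.

Section L1Norm.
Variables (R : rcfType) (n : nat).
Implicit Types (u v : 'rV[R[i]]_n).

(* An l1 norm on real coordinates: it dominates [cnorm] and, unlike [cnorm], has an
   elementary triangle inequality. *)
Definition l1norm v : R :=
  \sum_(j < n) (`|complex.Re (v ord0 j)| + `|complex.Im (v ord0 j)|).

Lemma l1norm_ge0 v : 0 <= l1norm v.
Proof. by apply: sumr_ge0 => j _; rewrite addr_ge0. Qed.

Lemma l1norm0 : l1norm 0 = 0.
Proof. by rewrite /l1norm big1 // => j _; rewrite mxE /= normr0 addr0. Qed.

Lemma l1normD u v : l1norm (u + v) <= l1norm u + l1norm v.
Proof.
rewrite /l1norm -big_split /=; apply: ler_sum => j _; rewrite !mxE.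
case: (u ord0 j) => a b; case: (v ord0 j) => a' b' /=.
by have := ler_normD a a'; have := ler_normD b b'; lra.
Qed.

Lemma l1normZ (c : R) v : l1norm (Complex c 0 *: v) = `|c| * l1norm v.
Proof.
rewrite /l1norm mulr_sumr; apply: eq_bigr => j _; rewrite !mxE.
by case: (v ord0 j) => a b /=; rewrite !mul0r subr0 addr0 mulrDr !normrM.
Qed.

Lemma cnorm_le_l1norm v : cnorm v <= l1norm v.
Proof.
rewrite /cnorm -(ger0_norm (l1norm_ge0 v)) -sqrtr_sqr; apply: ler_wsqrtr.
apply: le_trans (sum_sqr_le_sqr_sum _ _) => [|j]; last by rewrite addr_ge0.
apply: ler_sum => j _; set a := complex.Re _; set b := complex.Im _.
rewrite -[a ^+ 2]real_normK ?num_real // -[b ^+ 2]real_normK ?num_real //.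
by have := normr_ge0 a; have := normr_ge0 b; nra.
Qed.

End L1Norm.

Lemma exists_small_avoiding (R : realFieldType) (a : R) (P Q : pred R) :
  0 < a ->
  (forall c1 c2, P c1 -> P c2 -> c1 = c2) -> (forall c1 c2, Q c1 -> Q c2 -> c1 = c2) ->
  exists c, [/\ 0 < c, c <= a, ~~ P c & ~~ Q c].
Proof.
move=> a_gt0; wlog Pa : P Q / P a => [wlog_Pa P1 Q1|P1 Q1].
  have [Pa | nPa] := boolP (P a); first exact: wlog_Pa.
  have [Qa | nQa] := boolP (Q a); last by exists a.
  by have [c [? ? ? ?]] := wlog_Pa Q P Qa Q1 P1; exists c.
have nP c : c != a -> ~~ P c by move=> ca; apply: contra ca => Pc; rewrite (P1 _ _ Pc Pa).
have [Qa2 | nQa2] := boolP (Q (a / 2)).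
  exists (a / 4); split; rewrite ?nP; try lra; apply/negP => Qa4.
  by have := Q1 _ _ Qa2 Qa4; lra.
by exists (a / 2); split; rewrite ?nP //; lra.
Qed.

Lemma exists_small_line_perturbation (R : rcfType) (n : nat) (v x : 'rV[R[i]]_n)
    (W W0 : {vspace 'rV[R[i]]_n}) (eps : R) :
  0 < eps -> x \notin W ->
  exists c : R, [/\ l1norm (Complex c 0 *: x) < eps,
                    v - Complex c 0 *: x \notin W &
                    v \notin W0 -> v - Complex c 0 *: x \notin W0].
Proof.
move=> eps_gt0 xW; pose a := eps / (l1norm x + 1).
have x_ge0 := l1norm_ge0 x.
have a_gt0 : 0 < a by rewrite divr_gt0 // ltr_wpDl.
have eps_a : a * (l1norm x + 1) = eps by rewrite divfK // gt_eqF // ltr_wpDl.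
have line_once (Z : {vspace 'rV[R[i]]_n}) w : (x \notin Z) || (w \notin Z) ->
    forall c1 c2, w - Complex c1 0 *: x \in Z -> w - Complex c2 0 *: x \in Z -> c1 = c2.
  by move=> out c1 c2 Z1 Z2; case: (memv_line_uniq out Z1 Z2).
have P_once := line_once W v (introT orP (or_introl xW)).
have Q_once c1 c2 : (v \notin W0) && (v - Complex c1 0 *: x \in W0) ->
    (v \notin W0) && (v - Complex c2 0 *: x \in W0) -> c1 = c2.
  by move=> /andP[vW0 Z1] /andP[_ Z2]; apply: line_once Z1 Z2; rewrite vW0 orbT.
have [c [c_gt0 c_le_a cW cW0]] := exists_small_avoiding
  (P := fun c => v - Complex c 0 *: x \in W) a_gt0 P_once Q_once.
exists c; split => // [|vW0].
  by rewrite l1normZ ger0_norm ?ltW //; nra.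
by apply: contra cW0 => cW0; rewrite vW0.
Qed.

Definition deficiency (K : fieldType) (vT : vectType K) (d n : nat)
    (indep : {set 'I_d} -> bool) (g : 'I_d -> vT) : nat :=
  \sum_(l | `[< dep_hyperplane n indep l >]) (n.-1 - \dim (gspan g l)).

Lemma ltn_sum_subn (I : finType) (P : pred I) (N : nat) (f f' : I -> nat) i :
  P i -> {in P, forall j, f j <= f' j}%N -> (f i < f' i <= N)%N ->
  (\sum_(j | P j) (N - f' j) < \sum_(j | P j) (N - f j))%N.
Proof.
move=> Pi le_ff' /andP[lt_i le_N].
rewrite (bigD1 i Pi) [X in (_ < X)%N](bigD1 i Pi) /= -addSn leq_add //; first lia.
by apply: leq_sum => j /andP[Pj _]; rewrite leq_sub2l // le_ff'.
Qed.

Section Perturbation.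
Variables (R : rcfType) (d n : nat) (indep : {set 'I_d} -> bool).
Hypotheses (hpav : paving n indep) (htame : tame n indep).
Implicit Types (g : 'I_d -> 'rV[R[i]]_n) (l : {set 'I_d}).

Lemma perturb_deficiency_lt g l eps :
  in_circuit_variety indep g -> dep_hyperplane n indep l ->
  (\dim (gspan g l) < n.-1)%N -> 0 < eps ->
  exists g', [/\ in_circuit_variety indep g',
                 (deficiency n indep g' < deficiency n indep g)%N &
                 forall q, l1norm (g q - g' q) < eps].
Proof.
move=> hg hl lt_l eps_gt0; have hdim := (circuit_varietyP g hpav).1 hg.
have [p pl l_eq] : exists2 p, p \in l & gspan g (l :\ p) = gspan g l.
  by apply: gspan_redundant; case: hl => [[le_n _] _]; lia.
have [l0 [hl0 through_p]] := tame_dep_hyperplanes_through htame hl pl.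
have [x xl xl0] : exists2 x, x \notin gspan g l &
    (\dim (gspan g l0) = n.-1 -> x \in gspan g l0).
  exact: exists_notin_vspace_rV.
have [c [small cl cl0]] :=
  exists_small_line_perturbation (g p) (gspan g (l0 :\ p)) eps_gt0 xl.
pose g' := upd g p (g p - Complex c 0 *: x).
have dim_l : \dim (gspan g' l) = (\dim (gspan g l)).+1.
  by rewrite gspan_upd_in // l_eq dim_addv_line.
have dim_ge l' :
    dep_hyperplane n indep l' -> (\dim (gspan g l') <= \dim (gspan g' l'))%N.
  move=> hl'; have [pl' | pl'] := boolP (p \in l'); last by rewrite gspan_upd_out.
  by case: (through_p l' hl' pl') => ->; [rewrite dim_l | apply: dim_gspan_upd_ge].
have dim_lt l' : dep_hyperplane n indep l' -> (\dim (gspan g' l') < n)%N.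
  move=> hl'; have [pl' | pl'] := boolP (p \in l'); last by rewrite gspan_upd_out ?hdim.
  case: (through_p l' hl' pl') => E; subst l'; first by rewrite dim_l; lia.
  have [/xl0 xl0' | ne_l0] := eqVneq (\dim (gspan g l0)) n.-1.
    rewrite (leq_ltn_trans _ (hdim _ hl0)) // dimvS // gspan_upd_sub //.
    by rewrite rpredB ?rpredZ ?mem_gspan.
  have := hdim _ hl0; have := dim_gspan_upd_le g p (g p - Complex c 0 *: x) l0.
  by rewrite -/g'; lia.
exists g'; split.
- by apply/(circuit_varietyP _ hpav) => l' /dim_lt.
- apply: (@ltn_sum_subn _ _ _ _ _ l); first exact/asboolP.
    by move=> l' /asboolP /dim_ge.
  by rewrite dim_l ltnSn.
- move=> q; rewrite /g' /upd; case: eqP => [-> | _]; last by rewrite subrr l1norm0.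
  by rewrite opprB subrKC.
Qed.

Lemma perturb_dep_hyperplanes_full g eps :
  in_circuit_variety indep g -> 0 < eps ->
  exists gt, [/\ in_circuit_variety indep gt, forall q, l1norm (g q - gt q) < eps &
    forall l, dep_hyperplane n indep l -> \dim (gspan gt l) = n.-1].
Proof.
have [m] := ubnP (deficiency n indep g).
elim: m g eps => // m IH g eps lt_m hg eps_gt0.
have hdim := (circuit_varietyP g hpav).1 hg.
pose deficient l := `[< dep_hyperplane n indep l >] && (\dim (gspan g l) < n.-1)%N.
have [/existsP[l /andP[/asboolP hl lt_l]] | full] := boolP [exists l, deficient l].
  have eps2_gt0 : 0 < eps / 2 by lra.
  have [g' [hg' lt_def close_g']] := perturb_deficiency_lt hg hl lt_l eps2_gt0.
  have [gt [hgt close_gt full]] := IH g' _ (leq_trans lt_def lt_m) hg' eps2_gt0.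
  exists gt; split => // q.
  have -> : g q - gt q = (g q - g' q) + (g' q - gt q) by rewrite addrA subrK.
  by apply: le_lt_trans (l1normD _ _) _; have := close_g' q; have := close_gt q; lra.
exists g; split => // [q | l hl]; first by rewrite subrr l1norm0.
have := hdim l hl; move: full => /existsPn /(_ l); rewrite /deficient.
by rewrite (introT (asboolP _) hl) /= -leqNgt; lia.
Qed.

End Perturbation.

Theorem lemma8p3 (R : realType) (d n : nat) (indep : {set 'I_d} -> bool)
  (hpav : paving n indep) (htame : tame n indep)
  (g : 'I_d -> 'rV[R[i]]_n) (hg : in_circuit_variety indep g)
  (eps : R) (heps : 0 < eps) :
  exists gt : 'I_d -> 'rV[R[i]]_n,
    [/\ in_circuit_variety indep gt,
        (forall p : 'I_d, cnorm (g p - gt p) < eps) &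
        (forall l : {set 'I_d}, dep_hyperplane n indep l ->
           \dim (span (fam gt l)) = n.-1)].
Proof.
have [gt [hgt close full]] := perturb_dep_hyperplanes_full hpav htame hg heps.
exists gt; split => // [p | l hl]; first exact: le_lt_trans (cnorm_le_l1norm _) (close p).
by rewrite span_fam full.
Qed.
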